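(* Let $P$ be a set of $n\geq 5$ points in general position in the plane such that exactly $5$ points of $P$ lie on the boundary of the convex hull of $P$. Then $\mu(D(P))\geq\binom{n}{2}-9$.
   Context: General position means no three points collinear. $D(P)$ is the graph whose vertices are all closed segments with both endpoints in $P$, two adjacent iff disjoint. For a graph $G$ and $U\subseteq V(G)$, two distinct vertices $x,y\in U$ are $U$-mutually visible if $G$ contains a shortest $x$-$y$ path none of whose internal vertices lies in $U$; $U$ is a mutual-visibility set if every two distinct vertices of $U$ are $U$-mutually visible. $\mu(G)$ is the maximum size of a mutual-visibility set of $G$. *)

From HB Require Import structures.
From mathcomp Require Import all_boot all_order all_algebra.
From mathcomp Require Import boolp reals.
Set Implicit Arguments. Unset Strict Implicit. Unset Printing Implicit Defensive.
Import Order.TTheory GRing.Theory Num.Theory.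
Local Open Scope ring_scope.

Definition collinear (R : realType) (a b c : R * R) : Prop :=
  (b.1 - a.1) * (c.2 - a.2) - (b.2 - a.2) * (c.1 - a.1) = 0.

Definition general_position (R : realType) (n : nat) (p : 'I_n -> R * R) : Prop :=
  forall i j k : 'I_n, i != j -> j != k -> i != k -> ~ collinear (p i) (p j) (p k).

Definition in_hull (R : realType) (n : nat) (p : 'I_n -> R * R) (x : R * R) : Prop :=
  exists w : 'I_n -> R, (forall i, 0 <= w i) /\ \sum_i w i = 1 /\
    x = (\sum_i w i * (p i).1, \sum_i w i * (p i).2).

(* x lies on the (topological) boundary of the convex hull of P
   (the hull is closed, so boundary = hull minus interior) *)
Definition on_hull_boundary (R : realType) (n : nat) (p : 'I_n -> R * R)
    (x : R * R) : Prop :=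
  in_hull p x /\
  forall eps : R, 0 < eps -> exists y : R * R,
    (y.1 - x.1) ^+ 2 + (y.2 - x.2) ^+ 2 < eps ^+ 2 /\ ~ in_hull p y.

Definition on_seg (R : realType) (a b z : R * R) : Prop :=
  exists t : R, 0 <= t <= 1 /\
    z = ((1 - t) * a.1 + t * b.1, (1 - t) * a.2 + t * b.2).

(* vertices: segments with both endpoints in P, i.e. 2-subsets of indices *)
Definition seg (n : nat) := {s : {set 'I_n} | #|s| == 2%N}.

Definition seg_pt (R : realType) (n : nat) (p : 'I_n -> R * R) (s : seg n)
    (z : R * R) : Prop :=
  exists i j : 'I_n, [/\ i \in val s, j \in val s, i != j & on_seg (p i) (p j) z].

Definition D_adj (R : realType) (n : nat) (p : 'I_n -> R * R) (s1 s2 : seg n) : Prop :=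
  ~ exists z, seg_pt p s1 z /\ seg_pt p s2 z.

Definition D_rel (R : realType) (n : nat) (p : 'I_n -> R * R) : rel (seg n) :=
  fun s1 s2 => `[< D_adj p s1 s2 >].

(* walk x :: s from x to y *)
Definition is_walk (V : finType) (e : rel V) (x y : V) (s : seq V) : bool :=
  path e x s && (last x s == y).

Definition shortest_path (V : finType) (e : rel V) (x y : V) (s : seq V) : Prop :=
  is_walk e x y s /\ forall s', is_walk e x y s' -> (size s <= size s')%N.

Definition internal (V : finType) (x : V) (s : seq V) : seq V := behead (belast x s).

Definition mutually_visible (V : finType) (e : rel V) (U : {set V}) (x y : V) : Prop :=
  exists s, shortest_path e x y s /\ forall v, v \in internal x s -> v \notin U.

Definition mv_set (V : finType) (e : rel V) (U : {set V}) : Prop :=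
  forall x y, x \in U -> y \in U -> x != y -> mutually_visible e U x y.

Definition mu (V : finType) (e : rel V) : nat :=
  \max_(U : {set V} | `[< mv_set e U >]) #|U|.

(* Label the five hull vertices b_0, ..., b_4 counterclockwise, indices mod 5: the
   successor b_k |-> b_(k+1) is found by gift wrapping, and since it has no cycle of
   length 1 or 2 it permutes the five vertices cyclically.  The complement of a set W of
   segments is a mutual-visibility set of D(P) as soon as any two segments outside W are
   disjoint or both disjoint from a common segment of W (a path of length two through W).
   Call a segment uncrossed if it meets no segment avoiding its endpoints; every hull
   edge is uncrossed.
   If some ear b_(v-1) b_v b_(v+1) contains no further point, W consists of the nine
   segments joining hull vertices other than the diagonal b_(v-1) b_(v+1): for two
   segments outside W some hull edge shares no endpoint with either, unless one of them
   is that diagonal and the other lies strictly beyond it.  Otherwise every ear contains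
   a point, and the point q_v <> b_v reaching farthest across the diagonal
   b_(v-1) b_(v+1) towards b_v makes b_v q_v uncrossed.  The ears at v and v+2 are
   disjoint, so some q_a <> q_(a+1); then any four points avoid one of the four hull
   edges other than b_a b_(a+1) or one of the five segments b_v q_v, and these nine
   segments form W. *)

From HB Require Import structures.
From mathcomp Require Import all_boot all_order all_algebra.
From mathcomp Require Import boolp reals.
From mathcomp Require Import ring lra zify.
Set Implicit Arguments. Unset Strict Implicit. Unset Printing Implicit Defensive.
Import Order.TTheory GRing.Theory Num.Theory.
Local Open Scope ring_scope.

Section Orientation.
Variable R : realType.
Implicit Types a b c d x y : R * R.

Definition orient a b c : R := (b.1 - a.1) * (c.2 - a.2) - (b.2 - a.2) * (c.1 - a.1).

Lemma orient_aba a b : orient a b a = 0. Proof. rewrite /orient; ring. Qed.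
Lemma orient_abb a b : orient a b b = 0. Proof. rewrite /orient; ring. Qed.
Lemma orient_cycle a b c : orient a b c = orient b c a. Proof. rewrite /orient; ring. Qed.
Lemma orient_swap a b c : orient a b c = - orient b a c. Proof. rewrite /orient; ring. Qed.
Lemma orient_swap23 a b c : orient a b c = - orient a c b. Proof. rewrite /orient; ring. Qed.

Definition comb (t : R) a b : R * R := ((1 - t) * a.1 + t * b.1, (1 - t) * a.2 + t * b.2).

Lemma orient_comb a b c d t : orient a b (comb t c d) = (1 - t) * orient a b c + t * orient a b d.
Proof. rewrite /orient /comb /=; ring. Qed.

Lemma orient_comb_ends c d t : orient (comb t c d) c d = 0.
Proof. rewrite /orient /comb /=; ring. Qed.

Lemma on_seg_sym a b z : on_seg a b z -> on_seg b a z.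
Proof.
case=> t [/andP[t0 t1] ->]; exists (1 - t); split; first by apply/andP; split; lra.
by congr (_, _); ring.
Qed.

Lemma on_seg_line_halfplane a b c d z (A B : R * R) :
  orient A B a = 0 -> orient A B b = 0 -> 0 < orient A B c -> 0 < orient A B d ->
  on_seg a b z -> on_seg c d z -> False.
Proof.
move=> ha hb hc hd [t [_ ->]] [u [/andP[u0 u1]]].
move/(congr1 (orient A B)); rewrite -/(comb t a b) -/(comb u c d) !orient_comb ha hb.
have : 0 < (1 - u) * orient A B c + u * orient A B d by nra.
lra.
Qed.

Lemma on_seg_lowest a b c d z (A B : R * R) :
  orient A B a < orient A B b -> orient A B b <= orient A B c ->
  orient A B b <= orient A B d -> orient b c d != 0 ->
  on_seg a b z -> on_seg c d z -> False.
Proof.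
move=> hab hc hd /eqP hcol [t [/andP[t0 t1] ezt]] [u [/andP[u0 u1] ezu]].
have ht : t = 1.
  have := congr1 (orient A B) (etrans (esym ezt) ezu).
  rewrite -/(comb t a b) -/(comb u c d) !orient_comb; nra.
have zb : z = b by rewrite ezt ht; case: (b) => ? ? /=; congr pair; ring.
by apply: hcol; rewrite -zb ezu orient_comb_ends.
Qed.

(* In a convex pentagon [a b c d e], the ears cut off by the diagonals [a c] and [c e]
   are disjoint. *)
Lemma orient_two_ears a c d e x :
  0 < orient c d e -> 0 < orient c d a -> 0 < orient e a c -> 0 < orient c d x ->
  orient a c x < 0 -> orient c e x < 0 -> False.
Proof.
move=> cde cda eac cdx acx cex.
have plucker : orient c d e * orient a c x =
    orient c d x * orient e a c - orient c e x * orient c d a by rewrite /orient; ring.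
have : orient c d e * orient a c x < 0 by rewrite pmulr_rlt0.
rewrite plucker; apply/negP; rewrite -leNgt subr_ge0.
by apply: le_trans (ltW (mulr_gt0 cdx eac)); rewrite nmulr_rle0 // ltW.
Qed.

End Orientation.

Section Hull.
Variables (R : realType) (n : nat) (p : 'I_n -> R * R).

Lemma sum_affine (w : 'I_n -> R) (al be ga : R) : \sum_i w i = 1 ->
  al * (\sum_i w i * (p i).1) + be * (\sum_i w i * (p i).2) + ga =
  \sum_i w i * (al * (p i).1 + be * (p i).2 + ga).
Proof.
move=> w1; rewrite -[ga]mul1r -{1}w1 !mulr_sumr mulr_suml -!big_split /=.
by apply: eq_bigr => i _; ring.
Qed.

Lemma in_hull_orient_ge0 a c y :
  (forall k, 0 <= orient a c (p k)) -> in_hull p y -> 0 <= orient a c y.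
Proof.
move=> hk [w [w0 [w1 ->]]].
have affine i : w i * orient a c (p i) = w i * (- (c.2 - a.2) * (p i).1 +
    (c.1 - a.1) * (p i).2 + ((c.2 - a.2) * a.1 - (c.1 - a.1) * a.2)).
  by rewrite /orient; ring.
have -> : orient a c (\sum_i w i * (p i).1, \sum_i w i * (p i).2) =
    \sum_i w i * orient a c (p i).
  by rewrite (eq_bigr _ (fun i _ => affine i)) -sum_affine // /orient /=; ring.
by apply: sumr_ge0 => i _; apply: mulr_ge0.
Qed.

Lemma sum_indicator (j : 'I_n) (f : 'I_n -> R) : \sum_i (i == j)%:R * f i = f j.
Proof.
rewrite (bigD1 j) //= eqxx mul1r big1 ?addr0 // => i /negbTE ->; exact: mul0r.
Qed.

Lemma in_hull_point j : in_hull p (p j).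
Proof.
exists (fun i => (i == j)%:R); split=> [i|]; first exact: ler0n.
split; last by rewrite !sum_indicator; case: (p j).
by under eq_bigr do rewrite -[_%:R]mulr1; rewrite sum_indicator.
Qed.

Lemma on_hull_boundary_supporting a c i : a != c ->
  (forall k, 0 <= orient a c (p k)) -> orient a c (p i) = 0 ->
  on_hull_boundary p (p i).
Proof.
move=> ac hk hi; split=> [|eps eps0]; first exact: in_hull_point.
set L := (c.1 - a.1) ^+ 2 + (c.2 - a.2) ^+ 2.
have L0 : 0 < L.
  rewrite lt_def addr_ge0 ?sqr_ge0 // andbT paddr_eq0 ?sqr_ge0 // !sqrf_eq0 !subr_eq0.
  apply: contra ac => /andP[/eqP e1 /eqP e2].
  by rewrite [c]surjective_pairing e1 e2 -surjective_pairing.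
set t := eps / (1 + L).
have t0 : 0 < t by apply: divr_gt0 => //; lra.
have et : eps = t * (1 + L) by rewrite /t mulrVK // unitfE; lra.
exists ((p i).1 + t * (c.2 - a.2), (p i).2 - t * (c.1 - a.1)); split=> [|hin].
  rewrite /= et; set u := (c.1 - a.1); set v := (c.2 - a.2).
  have : 0 < t ^+ 2 by rewrite exprn_gt0.
  rewrite /L -/u -/v => tt; have := sqr_ge0 L; rewrite /L -/u -/v; nra.
have := in_hull_orient_ge0 hk hin.
rewrite [X in 0 <= X](_ : _ = orient a c (p i) - t * L); last by rewrite /orient /L /=; ring.
by rewrite hi sub0r oppr_ge0 lt_geF // mulr_gt0.
Qed.

Lemma orient_gt0_near a c x : 0 < orient a c x -> exists2 e : R, 0 < e &
  forall y, (y.1 - x.1) ^+ 2 + (y.2 - x.2) ^+ 2 < e ^+ 2 -> 0 < orient a c y.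
Proof.
move=> hx; set L := (c.1 - a.1) ^+ 2 + (c.2 - a.2) ^+ 2.
have L0 : 0 <= L by rewrite addr_ge0 ?sqr_ge0.
set e := orient a c x / (1 + L).
have e0 : 0 < e by rewrite divr_gt0 //; lra.
have oe : orient a c x = e * (1 + L) by rewrite /e mulrVK // unitfE; lra.
exists e => // y hy.
set P := (c.1 - a.1) * (y.2 - x.2) - (c.2 - a.2) * (y.1 - x.1).
have -> : orient a c y = orient a c x + P by rewrite /P /orient; ring.
have cauchy_schwarz : P ^+ 2 <= L * ((y.1 - x.1) ^+ 2 + (y.2 - x.2) ^+ 2).
  rewrite /P /L -subr_ge0.
  have -> : forall u v s t : R, (u ^+ 2 + v ^+ 2) * (s ^+ 2 + t ^+ 2) - (u * t - v * s) ^+ 2 =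
    (u * s + v * t) ^+ 2 by move=> *; ring.
  exact: sqr_ge0.
have : L * ((y.1 - x.1) ^+ 2 + (y.2 - x.2) ^+ 2) <= L * e ^+ 2 by rewrite ler_wpM2l // ltW.
rewrite oe; nra.
Qed.

Lemma in_hull_triangle i j k y :
  0 < orient (p i) (p j) y -> 0 < orient (p j) (p k) y -> 0 < orient (p k) (p i) y ->
  in_hull p y.
Proof.
set A := p i; set B := p j; set C := p k => hij hjk hki.
set D := orient B C y + orient C A y + orient A B y.
have D0 : D != 0 by rewrite gt_eqF // /D; lra.
pose al := orient B C y / D; pose be := orient C A y / D; pose ga := orient A B y / D.
pose w l := (l == i)%:R * al + (l == j)%:R * be + (l == k)%:R * ga.
have sum_w f : \sum_l w l * f l = al * f i + be * f j + ga * f k.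
  rewrite -(sum_indicator i f) -(sum_indicator j f) -(sum_indicator k f).
  rewrite !mulr_sumr -!big_split /=.
  by apply: eq_bigr => l _; rewrite /w; ring.
exists w; split=> [l|].
  by rewrite /w !addr_ge0 // mulr_ge0 // divr_ge0 // ?ltW // /D; lra.
split.
  under eq_bigr do rewrite -[w _]mulr1.
  rewrite (sum_w (fun=> 1)) !mulr1.
  by rewrite /al /be /ga -!mulrDl divff.
rewrite !sum_w -/A -/B -/C /al /be /ga; move: D0; rewrite /D /orient => D0.
by rewrite [y in LHS]surjective_pairing; congr pair; field.
Qed.

Lemma inside_not_on_hull_boundary i j k x :
  0 < orient (p i) (p j) x -> 0 < orient (p j) (p k) x -> 0 < orient (p k) (p i) x ->
  ~ on_hull_boundary p x.
Proof.
move=> /orient_gt0_near[e1 e1_0 near1] /orient_gt0_near[e2 e2_0 near2]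
  /orient_gt0_near[e3 e3_0 near3] [_ boundary].
set e := Num.min e1 (Num.min e2 e3).
have e0 : 0 < e by rewrite !lt_min e1_0 e2_0 e3_0.
have [y [hy not_in]] := boundary e e0.
have close e' : e <= e' -> (y.1 - x.1) ^+ 2 + (y.2 - x.2) ^+ 2 < e' ^+ 2.
  by move=> ee'; apply: (lt_le_trans hy); rewrite ler_pXn2r // ?nnegrE ltW // (lt_le_trans e0).
apply/not_in/(in_hull_triangle (near1 _ (close _ _)) (near2 _ (close _ _)) (near3 _ (close _ _)));
  by rewrite /e !ge_min lexx ?orbT.
Qed.

Hypothesis gp : general_position p.

Lemma orient_neq0 i j k : i != j -> j != k -> i != k -> orient (p i) (p j) (p k) != 0.
Proof. by move=> ij jk ik; apply/eqP/(gp ij jk ik). Qed.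

Definition hull_edge i j : Prop :=
  j != i /\ forall x, x != i -> x != j -> 0 < orient (p i) (p j) (p x).

Lemma exists_hull_edge i : on_hull_boundary p (p i) -> (exists j, j != i) ->
  exists j, hull_edge i j.
Proof.
(* Gift wrapping: [j] minimizes the number of rays [i y] having [j] on their left; a
   point right of [i j] would lower it, unless [p i] were inside a triangle of points. *)
move=> boundary [j0 j0i].
pose left_of y z := 0 < orient (p i) (p y) (p z).
pose rank j := #|[set y | (y != i) && left_of y j]|.
have [j ji jmin] := @arg_minnP _ j0 (fun j => j != i) rank j0i.
exists j; split=> // x xi xj.
have [ij ix jx] : [/\ i != j, i != x & j != x] by rewrite (eq_sym i) (eq_sym i) (eq_sym j).
rewrite lt_def orient_neq0 //= leNgt; apply/negP => xj_right.
have xj_left : left_of x j by rewrite /left_of orient_swap23 oppr_gt0.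
suff : (rank x < rank j)%N by rewrite ltnNge jmin.
apply/proper_card/properP; split; last first.
  by exists x; rewrite !inE ?xi ?xj_left // /left_of orient_abb ltxx andbF.
apply/subsetP => y; rewrite !inE => /andP[yi yx_left]; rewrite yi /=.
have yj : y != j by apply: contraTneq yx_left => ->; rewrite /left_of -leNgt ltW.
have yx : y != x by apply: contraTneq yx_left => ->; rewrite /left_of orient_abb ltxx.
have [iy jy] : i != y /\ j != y by rewrite (eq_sym i) (eq_sym j).
rewrite /left_of lt_def orient_neq0 //= leNgt; apply/negP => yj_right.
by apply: (inside_not_on_hull_boundary (i := j) (j := y) (k := x)) boundary;
  rewrite -orient_cycle // orient_swap23 oppr_gt0.
Qed.
End Hull.

Section SmallOrbits.
Variables (T : finType) (f : T -> T) (B : {set T}).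
Hypotheses (f_inj : injective f) (fB : {homo f : y / y \in B}).
Hypothesis no_short_cycle : {in B, forall y, f y != y /\ f (f y) != y}.

Lemma order_gt2 y : y \in B -> (2 < order f y)%N.
Proof.
move=> /no_short_cycle[f1 f2]; rewrite ltnNge; apply/negP.
have := iter_order f_inj y; have := order_gt0 f y.
by case: order => [|[|[|]]] //= _ e _; [rewrite e eqxx in f1 | rewrite e eqxx in f2].
Qed.

Lemma fconnect_closed y z : y \in B -> fconnect f y z -> z \in B.
Proof. by move=> yB /iter_findex <-; apply: iter_in. Qed.

Lemma order_eq_card x : x \in B -> (#|B| < 6)%N -> order f x = #|B|.
Proof.
(* Two disjoint orbits of length at least 3 do not fit in [B]. *)
move=> xB B6; have orbit_sub y : y \in B -> [set z | fconnect f y z] \subset B.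
  by move=> yB; apply/subsetP => z; rewrite inE; apply: fconnect_closed.
suff orbitB : [set z | fconnect f x z] = B by rewrite -orbitB cardsE.
apply/eqP; rewrite eqEsubset orbit_sub //=; apply/subsetP => y yB; rewrite inE.
apply: contraTT B6 => xy; rewrite -leqNgt.
have disj : [disjoint [set z | fconnect f x z] & [set z | fconnect f y z]].
  apply/pred0P => z; rewrite /= !inE; apply/negP => /andP[xz yz].
  by move: xy; rewrite (connect_trans xz) // fconnect_sym.
have := subset_leq_card (introT subUsetP (conj (orbit_sub x xB) (orbit_sub y yB))).
rewrite cardsU (disjoint_setI0 disj) cards0 subn0 !cardsE.
by apply: leq_trans; rewrite (leq_add (order_gt2 xB) (order_gt2 yB)).
Qed.

Lemma cyclic_labelling x : x \in B -> #|B| = 5%N ->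
  exists b : 'I_5 -> T, [/\ injective b, forall k, b k \in B & forall k, b (k + 1) = f (b k)].
Proof.
move=> xB B5; have ord5 : order f x = 5 by rewrite order_eq_card // B5.
exists (fun k => iter k f x); split=> [k l /(congr1 (findex f x))|k|].
- by rewrite !findex_iter ?ord5 // => /val_inj.
- exact: iter_in.
- by case=> [[|[|[|[|[|//]]]]] ?] //=; rewrite -[in LHS](iter_order f_inj x) ord5.
Qed.

End SmallOrbits.

Section HullPentagon.
Variables (R : realType) (n : nat) (p : 'I_n -> R * R) (B : {set 'I_n}).
Hypotheses (n5 : (5 <= n)%N) (p_inj : injective p) (gp : general_position p).
Hypotheses (B5 : #|B| = 5%N) (B_hull : forall i, i \in B <-> on_hull_boundary p (p i)).

Lemma hull_edge_ge0 i j k : hull_edge p i j -> 0 <= orient (p i) (p j) (p k).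
Proof.
move=> [_ ij]; have [->|ki] := eqVneq k i; first by rewrite orient_aba.
have [->|kj] := eqVneq k j; first by rewrite orient_abb.
exact/ltW/ij.
Qed.

Lemma hull_edge_boundary i j : hull_edge p i j -> on_hull_boundary p (p j).
Proof.
move=> ij; apply: (on_hull_boundary_supporting (a := p i) (c := p j)).
- by rewrite (inj_eq p_inj) eq_sym; case: ij.
- by move=> k; apply: hull_edge_ge0.
- exact: orient_abb.
Qed.

Lemma hull_edge_inj i i' j : hull_edge p i j -> hull_edge p i' j -> i = i'.
Proof.
move=> [ji iji] [ji' iji']; rewrite eq_sym in ji; rewrite eq_sym in ji'.
apply/eqP; apply: contraT => ii'.
have i'i : i' != i by rewrite eq_sym.
have := iji i' i'i ji'; have := iji' i ii' ji.
by rewrite orient_cycle orient_swap oppr_gt0 => /lt_trans/[apply]; rewrite ltxx.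
Qed.

Lemma exists_other (i j : 'I_n) : exists x, (x != i) && (x != j).
Proof.
apply/existsP; apply: contraLR n5; rewrite negb_exists => /forallP out; rewrite -ltnNge.
have : [set: 'I_n] \subset [set i; j].
  by apply/subsetP => x _; move: (out x); rewrite !inE negb_and !negbK.
by move/subset_leq_card; rewrite cardsT card_ord cards2 => /leq_ltn_trans; apply; case: (i != j).
Qed.

Lemma hull_edge_asym i j : hull_edge p i j -> ~ hull_edge p j i.
Proof.
move=> [_ iji] [_ jij]; have [x /andP[xi xj]] := exists_other i j.
have := iji _ xi xj; have := jij _ xj xi.
by rewrite orient_swap oppr_gt0 => /lt_trans/[apply]; rewrite ltxx.
Qed.

Lemma hull_pentagon : exists b : 'I_5 -> 'I_n, injective b /\
  forall k x, x != b k -> x != b (k + 1) -> 0 < orient (p (b k)) (p (b (k + 1))) (p x).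
Proof.
have [s s_edge] : exists s : 'I_n -> 'I_n,
    forall i, if i \in B then hull_edge p i (s i) else s i = i.
  apply: (@fin_all_exists _ (fun=> 'I_n)
    (fun i j => if i \in B then hull_edge p i j else j = i)) => i.
  have [iB|] := boolP (i \in B); last by exists i.
  apply: (exists_hull_edge gp ((B_hull i).1 iB)).
  by have [x /andP[xi _]] := exists_other i i; exists x.
have sB i : (s i \in B) = (i \in B).
  have := s_edge i; case: ifP => iB; last by move=> ->; rewrite iB.
  by move/hull_edge_boundary/B_hull.
have s_inj : injective s.
  move=> i i' sii'; have Bi' : (i' \in B) = (i \in B) by rewrite -sB -sii' sB.
  have := s_edge i; have := s_edge i'; rewrite Bi'.
  case: (i \in B) => e' e; first by rewrite sii' in e; apply: hull_edge_inj e e'.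
  by rewrite -e -e'.
have no_short : {in B, forall y, s y != y /\ s (s y) != y}.
  move=> y yB; have := s_edge y; rewrite yB => e; split; first by case: e.
  by apply/eqP => ssy; have := s_edge (s y); rewrite sB yB ssy; apply: hull_edge_asym.
have [b0 b0B] : exists b0, b0 \in B by apply/set0Pn; rewrite -card_gt0 B5.
have fB : {homo s : y / y \in B} by move=> y; rewrite sB.
have [b [b_inj bB bS]] := cyclic_labelling s_inj fB no_short b0B B5.
exists b; split=> // k x; rewrite bS; have := s_edge (b k); rewrite bB => -[_]; apply.
Qed.

End HullPentagon.

Section MutualVisibility.
Variables (V : finType) (e : rel V).

Lemma mv_set_setC (W : {set V}) :
  (forall s t, s \notin W -> t \notin W -> s != t ->
     e s t \/ exists2 w, w \in W & e s w /\ e w t) ->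
  mv_set e (~: W).
Proof.
move=> link x y; rewrite !inE => xW yW xy.
have not_loop : ~ is_walk e x y [::] by rewrite /is_walk /= => /eqP exy; rewrite exy eqxx in xy.
case exy: (e x y).
  exists [:: y]; split=> //; split; first by rewrite /is_walk /= exy eqxx.
  by case=> [/not_loop|].
case: (link x y xW yW xy) => [exy'|[w wW [exw ewy]]]; first by rewrite exy' in exy.
exists [:: w; y]; split=> [|v]; last by rewrite /internal /= inE => /eqP ->; rewrite inE negbK.
split; first by rewrite /is_walk /= exw ewy eqxx.
case=> [/not_loop|z [|//]] //.
by rewrite /is_walk /= andbT => /andP[exz /eqP zy]; rewrite -zy exz in exy.
Qed.

Lemma mu_ge_setC (W : {set V}) : mv_set e (~: W) -> (#|V| - #|W| <= mu e)%N.
Proof.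
move=> mvW; rewrite -[in #|W|](setCK W) -cardsCs.
exact: (@leq_bigmax_cond _ (fun U => `[< mv_set e U >]) (fun U => #|U|) _ (asboolT mvW)).
Qed.

End MutualVisibility.

Lemma disjoints2 (T : finType) (x y : T) (A : {set T}) :
  [disjoint [set x; y] & A] = (x \notin A) && (y \notin A).
Proof. by rewrite disjoints_subset subUset !sub1set !inE. Qed.

Section Segments.
Variables (R : realType) (n : nat) (p : 'I_n -> R * R).

Lemma seg_ends (s : seg n) : exists i j, i != j /\ val s = [set i; j].
Proof. by case: s => S /= /cards2P. Qed.

Lemma seg_of_pair (i j : 'I_n) : i != j -> {w : seg n | val w = [set i; j]}.
Proof.
move=> ij; have s2 : #|[set i; j]| == 2%N by rewrite cards2 ij.
by exists (exist _ [set i; j] s2).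
Qed.

Lemma card_seg : #|{: seg n}| = 'C(n, 2).
Proof.
rewrite card_sig -[in RHS](card_ord n) -card_draws.
by apply: eq_card => A; rewrite !inE.
Qed.

Lemma seg_ptE (s : seg n) i j z : i != j -> val s = [set i; j] ->
  seg_pt p s z <-> on_seg (p i) (p j) z.
Proof.
move=> ij es; split=> [[i' [j' []]]|zij]; last by exists i, j; rewrite es !inE !eqxx orbT.
rewrite es !inE => /orP[]/eqP-> /orP[]/eqP-> //; rewrite ?eqxx // => _; exact: on_seg_sym.
Qed.

Lemma D_rel_sym : symmetric (D_rel p).
Proof. by move=> s t; apply/asboolP/asboolP => st [z [zs zt]]; apply: st; exists z. Qed.

Lemma D_rel_of_pairs (s t : seg n) i j k l : i != j -> val s = [set i; j] ->
  k != l -> val t = [set k; l] ->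
  (forall z, on_seg (p i) (p j) z -> on_seg (p k) (p l) z -> False) -> D_rel p s t.
Proof.
move=> ij es kl et st; apply/asboolP => -[z []].
by rewrite (seg_ptE _ ij es) (seg_ptE _ kl et); apply: st.
Qed.

Definition uncrossed (w : seg n) := forall s : seg n, [disjoint val s & val w] -> D_rel p s w.

Lemma uncrossedP (w : seg n) i j : i != j -> val w = [set i; j] ->
  (forall k l z, k != l -> k \notin val w -> l \notin val w ->
     on_seg (p k) (p l) z -> on_seg (p i) (p j) z -> False) ->
  uncrossed w.
Proof.
move=> ij ew sep s; have [k [l [kl es]]] := seg_ends s.
rewrite es -setI_eq0 => /eqP dis.
have out x : x \in [set k; l] -> x \notin val w.
  by move=> xkl; apply/negP => xw; have := in_set0 x; rewrite -dis inE xkl xw.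
apply: (D_rel_of_pairs kl es ij ew) => z; apply: (sep _ _ z kl); apply: out;
  by rewrite !inE eqxx ?orbT.
Qed.

Lemma pair_link (W : {set seg n}) (s t : seg n) i j :
  i != j -> (forall w : seg n, val w = [set i; j] -> w \in W /\ uncrossed w) ->
  [disjoint [set i; j] & val s :|: val t] ->
  exists2 w, w \in W & D_rel p s w /\ D_rel p w t.
Proof.
move=> ij hW dis; have [w ew] := seg_of_pair ij; have [wW unc] := hW w ew.
exists w => //; split; last rewrite D_rel_sym; apply: unc; rewrite ew disjoint_sym;
  by apply: disjointWr dis; rewrite ?subsetUl ?subsetUr.
Qed.

Definition segs_of (S : {set {set 'I_n}}) : {set seg n} := [set w : seg n | val w \in S].

Lemma card_segs_of S : (#|segs_of S| <= #|S|)%N.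
Proof.
rewrite -(card_imset _ val_inj); apply/subset_leq_card/subsetP => X /imsetP[w].
by rewrite inE => wS ->.
Qed.

End Segments.

Section Pentagon.
Variables (R : realType) (n : nat) (p : 'I_n -> R * R).
Hypothesis gp : general_position p.
Variable b : 'I_5 -> 'I_n.
Hypothesis b_inj : injective b.
Hypothesis b_edge : forall k x, x != b k -> x != b (k + 1) ->
  0 < orient (p (b k)) (p (b (k + 1))) (p x).

(* [b] lists the hull vertices counterclockwise; indices live in the ring ['I_5], so
   [k + 1] wraps around.  [height v x < 0] means that [x] lies across the diagonal
   [diag v], on the side of [b v]. *)
Definition hull_vertices := [set b k | k : 'I_5].
Definition edge k := [set b k; b (k + 1)].
Definition diag v := [set b (v - 1); b (v + 1)].
Definition ear v := [set b (v - 1); b v; b (v + 1)].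
Definition height v x := orient (p (b (v - 1))) (p (b (v + 1))) (p x).

Lemma b_neq k l : k != l -> b k != b l. Proof. by rewrite (inj_eq b_inj). Qed.

Lemma card_hull_vertices : #|hull_vertices| = 5%N.
Proof. by rewrite card_imset // card_ord. Qed.

Lemma edge_neq k : b k != b (k + 1).
Proof. by apply: b_neq; case: k => [[|[|[|[|[|]]]]] ?]. Qed.

Lemma diag_neq v : b (v - 1) != b (v + 1).
Proof. by apply: b_neq; case: v => [[|[|[|[|[|]]]]] ?]. Qed.

Lemma edge_uncrossed k (w : seg n) : val w = edge k -> uncrossed p w.
Proof.
move=> ew; apply: (uncrossedP (edge_neq k) ew) => k' l' z _.
rewrite ew !inE !negb_or => /andP[k'1 k'2] /andP[l'1 l'2] zk'l' zedge.
exact: (on_seg_line_halfplane (orient_aba _ _) (orient_abb _ _)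
  (b_edge k'1 k'2) (b_edge l'1 l'2) zedge zk'l').
Qed.

Lemma b_edge_ge0 k x : 0 <= orient (p (b k)) (p (b (k + 1))) (p x).
Proof.
have [->|xk] := eqVneq x (b k); first by rewrite orient_aba.
have [->|xk1] := eqVneq x (b (k + 1)); first by rewrite orient_abb.
exact/ltW/b_edge.
Qed.

Lemma b_edge_at k l : l != k -> l != k + 1 ->
  0 < orient (p (b k)) (p (b (k + 1))) (p (b l)).
Proof. by move=> lk lk1; apply: b_edge; rewrite (inj_eq b_inj). Qed.

Lemma pred_neq v : b (v - 1) != b v.
Proof. by apply: b_neq; case: v => [[|[|[|[|[|]]]]] ?]. Qed.

Lemma height_lt v x : x != b v -> height v (b v) < height v x.
Proof.
move=> xv; rewrite -subr_gt0 /height.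
set a := p (b (v - 1)); set m := p (b v); set c := p (b (v + 1)).
have -> : orient a c (p x) - orient a c m = orient a m (p x) + orient m c (p x).
  by rewrite /orient; ring.
have [->|xv1] := eqVneq x (b (v - 1)).
  by rewrite orient_aba add0r b_edge // ?pred_neq // diag_neq.
have := b_edge_ge0 v x; have := b_edge xv1; rewrite subrK => /(_ xv); lra.
Qed.

Lemma I5_around (k v : 'I_5) : k != v -> [|| k == v - 1, k == v + 1, k == v + 2 | k == v - 2].
Proof. by case: k => [[|[|[|[|[|]]]]] ?]; case: v => [[|[|[|[|[|]]]]] ?]. Qed.

Lemma height_ge0 v k : k != v -> 0 <= height v (b k).
Proof.
rewrite /height => /I5_around/or4P[] /eqP->; rewrite ?orient_aba ?orient_abb //.
  by rewrite orient_cycle -[v + 2](_ : v + 1 + 1 = _) ?b_edge_ge0 //; ring.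
by rewrite -orient_cycle -[v - 1](_ : v - 2 + 1 = _) ?b_edge_ge0 //; ring.
Qed.

Lemma edge_link (W : {set seg n}) (s t : seg n) k :
  (forall w : seg n, val w = edge k -> w \in W) ->
  [disjoint edge k & val s :|: val t] ->
  exists2 w, w \in W & D_rel p s w /\ D_rel p w t.
Proof.
move=> hW; apply: pair_link (edge_neq k) _ => w ew.
by split; [exact: hW | exact: (edge_uncrossed ew)].
Qed.

Lemma edge_avoiding (T : {set 'I_n}) : (#|T :&: hull_vertices| <= 2)%N ->
  exists k, [disjoint edge k & T].
Proof.
(* A hull vertex in [T] blocks the two edges through it, so at most four are blocked. *)
move=> T2; set K := [set k | b k \in T].
have cardK : #|K| = #|T :&: hull_vertices|.
  rewrite -(card_imset _ b_inj); apply: eq_card => x; rewrite !inE.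
  apply/imsetP/andP => [[k] | [xT /imsetP[k _ xk]]]; last by exists k; rewrite // inE -xk.
  by rewrite inE => kT ->; split; last exact: imset_f.
have /set0Pn[k] : ~: (K :|: [set k - 1 | k in K]) != set0.
  rewrite -card_gt0 cardsCs setCK card_ord subn_gt0.
  apply: leq_ltn_trans (leq_card_setU _ _) _.
  by apply: leq_ltn_trans (leq_add (leqnn _) (leq_imset_card _ _)) _; rewrite cardK; lia.
rewrite !inE negb_or => /andP[kK kK1]; exists k; rewrite disjoints2 kK /=.
by apply: contra kK1 => k1T; apply/imsetP; exists (k + 1); rewrite ?inE ?addrK.
Qed.

Definition hull_pairs := [set S : {set 'I_n} | S \subset hull_vertices & #|S| == 2%N].

Lemma pair_in_hull_pairs k l : k != l -> [set b k; b l] \in hull_pairs.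
Proof.
move=> kl; rewrite inE cards2 b_neq // andbT subUset !sub1set.
by rewrite !imset_f.
Qed.

Lemma ear_subset_hull v : ear v \subset hull_vertices.
Proof. by rewrite !subUset !sub1set !imset_f. Qed.

Lemma edge_opposite_ear v : [disjoint edge (v + 2) & ear v].
Proof.
rewrite disjoints2 !inE !(inj_eq b_inj) -!negb_or.
by case: v => [[|[|[|[|[|]]]]] ?].
Qed.

Lemma edge_neq_diag k v : edge k != diag v.
Proof.
apply/eqP => e; have := set21 (b k) (b (k + 1)); have := set22 (b k) (b (k + 1)).
rewrite -/(edge k) e !inE !(inj_eq b_inj); clear e.
by case: k => [[|[|[|[|[|]]]]] ?]; case: v => [[|[|[|[|[|]]]]] ?].
Qed.

Section EmptyEar.
Variable v : 'I_5.
Hypothesis ear_empty : forall x, x \notin ear v -> 0 < height v x.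

Definition ear_blockers := segs_of (hull_pairs :\ diag v).

Lemma card_ear_blockers : (#|ear_blockers| <= 9)%N.
Proof.
apply: leq_trans (card_segs_of _) _.
have := cardsD1 (diag v) hull_pairs.
rewrite cards_draws card_hull_vertices pair_in_hull_pairs //.
  by move=> e; rewrite -(leq_add2l 1) -e.
by case: v => [[|[|[|[|[|]]]]] ?].
Qed.

Lemma edge_in_ear_blockers k (w : seg n) : val w = edge k -> w \in ear_blockers.
Proof.
move=> ew; rewrite inE ew in_setD1 edge_neq_diag pair_in_hull_pairs //.
by rewrite -(inj_eq b_inj) edge_neq.
Qed.

Lemma off_hull_or_diag (w : seg n) : w \notin ear_blockers ->
  val w = diag v \/ exists x y, [/\ x != y, val w = [set x; y] & x \notin hull_vertices].
Proof.
have [x [y [xy ew]]] := seg_ends w.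
have [xh|xh] := boolP (x \in hull_vertices); last by right; exists x, y.
have [yh|yh] := boolP (y \in hull_vertices); last by right; exists y, x; rewrite setUC eq_sym.
rewrite inE !inE => /nandP[/negPn/eqP|]; first by left.
by rewrite ew subUset !sub1set xh yh cards2 xy.
Qed.

Lemma diag_link (s t : seg n) x y : val s = diag v -> x != y -> val t = [set x; y] ->
  x \notin hull_vertices ->
  D_rel p s t \/ exists2 w, w \in ear_blockers & D_rel p s w /\ D_rel p w t.
Proof.
move=> es xy et xh.
have xe : x \notin ear v by apply: contra xh; apply/subsetP/ear_subset_hull.
have [ye|ye] := boolP (y \in ear v).
  right; apply: (edge_link (k := v + 2)) => [w|]; first exact: edge_in_ear_blockers.
  have sub : val s :|: val t \subset x |: ear v.
    by rewrite es et !subUset !sub1set !in_setU1 eqxx ye !orbT /= !inE !eqxx !orbT.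
  apply: disjointWr sub _; rewrite disjoints_subset setCU subsetI -disjoints_subset.
  rewrite -[_ \subset ~: ear v]disjoints_subset edge_opposite_ear andbT disjoint_sym disjoints1.
  by apply: contra xh; apply/subsetP; rewrite subUset !sub1set !imset_f.
left; apply: (D_rel_of_pairs (diag_neq v) es xy et) => z.
apply: on_seg_line_halfplane (orient_aba _ _) (orient_abb _ _) (ear_empty xe) (ear_empty ye).
Qed.

Lemma mv_set_empty_ear : mv_set (D_rel p) (~: ear_blockers).
Proof.
apply: mv_set_setC => s t /off_hull_or_diag[es|[xs [ys [xys es xsh]]]]
  /off_hull_or_diag[et|[xt [yt [xyt et xth]]]] st.
- by rewrite (val_inj (etrans es (esym et))) eqxx in st.
- exact: diag_link es xyt et xth.
- have [|[w wW [sw wt]]] := diag_link et xys es xsh; first by left; rewrite D_rel_sym.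
  by right; exists w => //; split; rewrite D_rel_sym.
right; have [k dk] : exists k, [disjoint edge k & val s :|: val t].
  apply: edge_avoiding; apply: leq_trans (_ : #|[set ys; yt]| <= 2)%N;
    last by rewrite cards2 ltnS leq_b1.
  apply/subset_leq_card/subsetP => z; rewrite es et !inE -orbA.
  case/andP=> /or4P[] /eqP-> zh; rewrite ?eqxx ?orbT //.
    by rewrite zh in xsh.
  by rewrite zh in xth.
by apply: edge_link dk => w; apply: edge_in_ear_blockers.
Qed.

End EmptyEar.

Lemma I5_near (k l : 'I_5) : k != l -> [|| l == k + 1, k == l + 1, l == k + 2 | k == l + 2].
Proof. by case: k => [[|[|[|[|[|]]]]] ?]; case: l => [[|[|[|[|[|]]]]] ?]. Qed.

Section FullEars.
Hypothesis ears_nonempty : forall v, exists2 x, x \notin ear v & height v x <= 0.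

Lemma exists_ear_minimum : exists q : 'I_5 -> 'I_n, forall v,
  [/\ q v != b v, height v (q v) < 0 & forall x, x != b v -> height v (q v) <= height v x].
Proof.
apply: (@fin_all_exists _ (fun=> 'I_n) (fun v m => [/\ m != b v, height v m < 0 &
  forall x, x != b v -> height v m <= height v x])) => v.
have [x xe hx] := ears_nonempty v.
move: xe; rewrite !inE !negb_or => /andP[/andP[xv1 xv] xv2].
have [m mv mmin] := @arg_minP _ _ _ x (fun y => y != b v) (height v) xv.
exists m; split=> //.
apply: le_lt_trans (mmin x xv) _.
by rewrite lt_neqAle hx andbT orient_neq0 ?diag_neq // eq_sym.
Qed.

Variable q : 'I_5 -> 'I_n.
Hypothesis q_min : forall v,
  [/\ q v != b v, height v (q v) < 0 & forall x, x != b v -> height v (q v) <= height v x].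

Lemma q_off_hull v : q v \notin hull_vertices.
Proof.
have [qv hq _] := q_min v; apply/imsetP => -[k _ qk].
have [kv|kv] := eqVneq k v; first by rewrite qk kv eqxx in qv.
by have := height_ge0 kv; rewrite -qk leNgt hq.
Qed.

Lemma q_neq2 v : q v != q (v + 2).
Proof.
have /and5P[/eqP succ3 i1 i2 i3 i4] : [&& v + 2 + 1 == v - 2, v - 2 != v + 1,
  v - 2 != v + 2, v - 1 != v + 1 & v - 1 != v + 2] by case: v => [[|[|[|[|[|]]]]] ?].
have succ2 : v + 1 + 1 = v + 2 by ring.
have pred2 : v - 2 + 1 = v - 1 by ring.
apply/eqP => qq; have [_ hv _] := q_min v; have [_ hv2 _] := q_min (v + 2).
move: hv2; rewrite -qq /height succ3 (_ : v + 2 - 1 = v + 1); last by ring.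
apply: (orient_two_ears (a := p (b (v - 1))) (d := p (b (v + 2)))) hv.
- by rewrite -succ2 b_edge_at // succ2.
- by rewrite -succ2 b_edge_at // succ2.
- by rewrite -pred2 b_edge_at // ?pred2 eq_sym.
- rewrite -succ2; apply: b_edge; apply: contraNneq (q_off_hull v) => ->; exact: imset_f.
Qed.

Lemma exists_q_jump : exists a, q a != q (a + 1).
Proof.
apply/existsP; apply: contraT => /existsPn q_const.
have qS u : q (u + 1) = q u by apply/esym/eqP; have := q_const u; rewrite negbK.
by have := q_neq2 0; rewrite -[0 + 2](_ : 0 + 1 + 1 = _) ?qS ?eqxx //; ring.
Qed.

Definition fan u := [set b u; q u].

Lemma fan_uncrossed u (w : seg n) : val w = fan u -> uncrossed p w.
Proof.
have [qu hu hmin] := q_min u; have ub : b u != q u by rewrite eq_sym.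
move=> ew; apply: (uncrossedP ub ew) => k l z kl.
rewrite ew !inE !negb_or => /andP[kb kq] /andP[lb lq] zkl zbq.
apply: (on_seg_lowest (height_lt qu) (hmin _ kb) (hmin _ lb) _ zbq zkl).
by apply: orient_neq0; rewrite // eq_sym.
Qed.

Variable a : 'I_5.
Hypothesis q_jump : q a != q (a + 1).

Definition fan_blockers := segs_of ([set edge k | k in [set~ a]] :|: [set fan u | u : 'I_5]).

Lemma card_fan_blockers : (#|fan_blockers| <= 9)%N.
Proof.
apply: leq_trans (card_segs_of _) _; apply: leq_trans (leq_card_setU _ _) _.
rewrite -[9%N]/(4 + 5)%N; apply: leq_add; apply: leq_trans (leq_imset_card _ _) _.
  by rewrite cardsC1 card_ord.
by rewrite card_ord.
Qed.

Lemma edge_or_fan_avoiding (T : {set 'I_n}) : (#|T| <= 4)%N ->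
  (exists2 k, k != a & [disjoint edge k & T]) \/ (exists u, [disjoint fan u & T]).
Proof.
move=> T4.
case: (boolP [exists k, (k != a) && [disjoint edge k & T]]) =>
  [/existsP[k /andP[ka dk]]|/existsPn no_edge]; first by left; exists k.
case: (boolP [exists u, [disjoint fan u & T]]) => [/existsP[u du]|/existsPn no_fan];
  first by right; exists u.
(* Otherwise [T] contains [b u] for [u] outside [M] and the pairwise distinct [q u] for
   [u] in [M]: five points. *)
exfalso; set M := [set u | b u \notin T].
have qM u : u \in M -> q u \in T.
  by rewrite inE => bu; apply: contraR (no_fan u) => qu; rewrite disjoints2 bu.
have edge_cut k : b k \notin T -> b (k + 1) \notin T -> q k != q (k + 1).
  by move=> bk bk1; have := no_edge k; rewrite disjoints2 bk bk1 !andbT negbK => /eqP->.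
have q_inj : {in M &, injective q}.
  move=> u w; rewrite !inE => bu bw quw; apply/eqP; apply: contraT => /I5_near.
  case/or4P=> /eqP e.
  - by have := edge_cut u bu; rewrite -e quw eqxx => /(_ bw).
  - by have := edge_cut w bw; rewrite -e quw eqxx => /(_ bu).
  - by have := q_neq2 u; rewrite -e quw eqxx.
  - by have := q_neq2 w; rewrite -e quw eqxx.
have sub : (b @: ~: M) :|: (q @: M) \subset T.
  apply/subsetP => x; rewrite inE => /orP[/imsetP[k kM ->]|/imsetP[u uM ->]]; last exact: qM.
  by move: kM; rewrite !inE negbK.
have disj : [disjoint b @: ~: M & q @: M].
  rewrite disjoints_subset; apply/subsetP => _ /imsetP[k _ ->]; rewrite inE.
  by apply/imsetP => -[u _ e]; move: (q_off_hull u); rewrite -e imset_f.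
have := subset_leq_card sub; rewrite cardsU (disjoint_setI0 disj) cards0 subn0.
rewrite (card_imset _ b_inj) (card_in_imset q_inj) addnC cardsC card_ord.
by move=> /leq_trans/(_ T4).
Qed.

Lemma mv_set_fans : mv_set (D_rel p) (~: fan_blockers).
Proof.
apply: mv_set_setC => s t _ _ _; right.
have T4 : (#|val s :|: val t| <= 4)%N.
  by apply: leq_trans (leq_card_setU _ _) _; rewrite (eqP (valP s)) (eqP (valP t)).
case: (edge_or_fan_avoiding T4) => [[k ka dk]|[u du]].
  apply: edge_link dk => w ew; rewrite inE ew inE; apply/orP; left.
  by apply: imset_f; rewrite !inE.
have [qu _ _] := q_min u.
apply: pair_link _ _ du => [|w ew]; first by rewrite eq_sym.
split; last exact: fan_uncrossed ew.
by rewrite inE ew inE; apply/orP; right; apply: imset_f.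
Qed.

End FullEars.

Lemma pentagon_mv_set : exists W : {set seg n}, (#|W| <= 9)%N /\ mv_set (D_rel p) (~: W).
Proof.
case: (boolP [exists v, [forall x, (x \notin ear v) ==> (0 < height v x)]]) =>
  [/existsP[v /forallP empty]|/existsPn full].
  exists (ear_blockers v); split; first exact: card_ear_blockers.
  by apply: mv_set_empty_ear => x; apply/implyP/empty.
have ears_nonempty v : exists2 x, x \notin ear v & height v x <= 0.
  by have /forallPn[x] := full v; rewrite negb_imply -leNgt => /andP[]; exists x.
have [q q_min] := exists_ear_minimum ears_nonempty.
have [a q_jump] := exists_q_jump q_min.
exists (fan_blockers q a); split; first exact: card_fan_blockers.
exact: mv_set_fans.
Qed.

End Pentagon.

Theorem lemma14 (R : realType) (n : nat) (p : 'I_n -> R * R) :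
  (5 <= n)%N ->
  injective p ->
  general_position p ->
  (exists B : {set 'I_n}, #|B| = 5%N /\ forall i, i \in B <-> on_hull_boundary p (p i)) ->
  ('C(n, 2) - 9 <= mu (D_rel p))%N.
Proof.
move=> n5 p_inj gp [B [B5 B_hull]].
have [b [b_inj b_edge]] := hull_pentagon n5 p_inj gp B5 B_hull.
have [W [W9 mvW]] := pentagon_mv_set gp b_inj b_edge.
by apply: leq_trans (mu_ge_setC mvW); rewrite card_seg leq_sub2l.
Qed.
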